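(* In the setting of the context (with $g$ unimodal, symmetric about $0$ and logconcave), letting $d_2=G^{-1}\big(1-\frac{\alpha^2}{1+\alpha}\big)-d_0$, one has $$\sup_{\theta\ge0}C(\theta)\ \ge\ C(d_2)\ \ge\ G(x_1(d_2))-\frac{\alpha^2}{1+\alpha}.$$
   Context: Let $g$ be a probability density on $\mathbb{R}$, unimodal and symmetric about $0$ (i.e. $g(z)=g(-z)$ and $g$ nonincreasing on $[0,\infty)$), and logconcave ($\log g$ concave on its support), with cdf $G$ and quantile function $G^{-1}(t)=\inf\{x:G(x)\ge t\}$. Let $X$ have density $g(x-\theta)$, $\theta\ge0$, and $P_\theta$ the corresponding probability. Fix $\alpha\in(0,1)$, and set $d_0=G^{-1}(\tfrac1{1+\alpha})$. The HPD credible interval (prior $1_{[0,\infty)}(\theta)$, credibility $1-\alpha$) is $[l(X),u(X)]$ with $l(x)=\{x-G^{-1}(\tfrac12+\tfrac{1-\alpha}2G(x))\}1_{(d_0,\infty)}(x)$, $u(x)=x-G^{-1}(\alpha G(x))$ for $x\le d_0$ and $u(x)=x+G^{-1}(\tfrac12+\tfrac{1-\alpha}2G(x))$ for $x>d_0$. The frequentist coverage is $C(\theta)=P_\theta(l(X)\le\theta\le u(X))$. Let $l^{-1}(\theta)=\sup\{x:\theta\ge l(x)\}$ and $x_1(\theta)=l^{-1}(\theta)-\theta$ for $\theta\ge0$. *)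

From Stdlib Require Import Reals Lra ClassicalEpsilon.
Open Scope R_scope.

Definition integral_on (f : R -> R) (a b v : R) : Prop :=
  exists pr : Riemann_integrable f a b, RiemannInt pr = v.

Definition improper_integral (f : R -> R) (v : R) : Prop :=
  forall eps, 0 < eps -> exists M, forall a b, a <= - M -> M <= b ->
    exists w, integral_on f a b w /\ Rabs (w - v) < eps.

Definition is_cdf_of (g G : R -> R) : Prop :=
  (forall a b, a <= b -> integral_on g a b (G b - G a)) /\
  (forall eps, 0 < eps -> exists M, forall x, x <= - M -> Rabs (G x) < eps) /\
  (forall eps, 0 < eps -> exists M, forall x, M <= x -> Rabs (G x - 1) < eps).

Definition is_glb (E : R -> Prop) (m : R) : Prop :=
  (forall x, E x -> m <= x) /\ (forall m', (forall x, E x -> m' <= x) -> m' <= m).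

Definition glb (E : R -> Prop) : R := epsilon (inhabits 0) (is_glb E).
Definition lub (E : R -> Prop) : R := epsilon (inhabits 0) (is_lub E).

Definition Ginv (G : R -> R) (t : R) : R := glb (fun x => G x >= t).

Definition d0 (G : R -> R) (alpha : R) : R := Ginv G (1 / (1 + alpha)).

(* HPD interval endpoints *)
Definition lo (G : R -> R) (alpha x : R) : R :=
  if Rlt_dec (d0 G alpha) x
  then x - Ginv G (1/2 + (1 - alpha) / 2 * G x)
  else 0.

Definition up (G : R -> R) (alpha x : R) : R :=
  if Rle_dec x (d0 G alpha)
  then x - Ginv G (alpha * G x)
  else x + Ginv G (1/2 + (1 - alpha) / 2 * G x).

Definition cover_ind (G : R -> R) (alpha theta x : R) : R :=
  if Rle_dec (lo G alpha x) theta then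
    if Rle_dec theta (up G alpha x) then 1 else 0
  else 0.

(* frequentist coverage C(theta) = P_theta(l(X) <= theta <= u(X)),
   X having density x |-> g (x - theta) *)
Definition coverage (g G : R -> R) (alpha theta : R) : R :=
  epsilon (inhabits 0)
    (improper_integral (fun x => g (x - theta) * cover_ind G alpha theta x)).

Definition linv (G : R -> R) (alpha theta : R) : R :=
  lub (fun x => theta >= lo G alpha x).

Definition x1 (G : R -> R) (alpha theta : R) : R := linv G alpha theta - theta.

(* Write c = alpha^2/(1+alpha), p0 = 1/(1+alpha), d0 = G^{-1}(p0),
   q = G^{-1}(1 - c) and th = d2 = q - d0 > 0.  The first claim holds because
   th >= 0, so C(th) belongs to the set whose supremum is taken.  For the
   second, the integrand x |-> g (x - th) 1{l x <= th <= u x} is analysed: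
   - l vanishes up to d0 and is nondecreasing after (increments of G shrink
     beyond the mode), so {x | l x <= th} is a half line ending at s = l^{-1}(th);
   - u is nondecreasing where G > 0 (below d0 by log-concavity of G, inherited
     from g; beyond d0 it stays above th) and u (-d0) >= th, so
     {x | G x > 0, th <= u x} is an up-set containing -d0, with infimum r <= -d0.
   Hence C(th) = G (s - th) - G (r - th) >= G (x1 th) - G (-q) = G (x1 th) - c. *)

From Stdlib Require Import Reals Lra Classical ClassicalEpsilon.
From Coquelicot Require Import Coquelicot.
Open Scope R_scope.

Lemma integral_on_iff (f : R -> R) (a b v : R) :
  integral_on f a b v <-> is_RInt f a b v.
Proof.
  split.
  - intros [pr <-]. rewrite <- (RInt_Reals f a b pr).
    exact (RInt_correct f a b (ex_RInt_Reals_1 f a b pr)).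
  - intros Hv. exists (ex_RInt_Reals_0 f a b (ex_intro _ v Hv)).
    rewrite <- RInt_Reals. exact (is_RInt_unique f a b v Hv).
Qed.

Lemma is_RInt_R_unique (f : R -> R) (a b l1 l2 : R) :
  is_RInt f a b l1 -> is_RInt f a b l2 -> l1 = l2.
Proof.
  intros H1 H2. rewrite <- (is_RInt_unique f a b l1 H1). exact (is_RInt_unique f a b l2 H2).
Qed.

Lemma is_RInt_const_R (a b v : R) : is_RInt (fun _ => v) a b ((b - a) * v).
Proof. exact (is_RInt_const a b v). Qed.

Lemma is_RInt_vanishing (f : R -> R) (a b : R) :
  (forall x, Rmin a b < x < Rmax a b -> f x = 0) -> is_RInt f a b 0.
Proof.
  intros Hf. apply (is_RInt_ext (fun _ => 0)); [intros x Hx; symmetry; auto|].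
  assert (H := is_RInt_const_R a b 0). rewrite Rmult_0_r in H. exact H.
Qed.

Lemma improper_integral_unique (f : R -> R) (v1 v2 : R) :
  improper_integral f v1 -> improper_integral f v2 -> v1 = v2.
Proof.
  intros H1 H2. apply NNPP. intros Hne.
  assert (Hpos : 0 < Rabs (v1 - v2)) by (apply Rabs_pos_lt; lra).
  set (e := Rabs (v1 - v2) / 2).
  destruct (H1 e ltac:(unfold e; lra)) as [M1 HM1].
  destruct (H2 e ltac:(unfold e; lra)) as [M2 HM2].
  set (M := Rmax (Rabs M1) (Rabs M2)).
  assert (B1 : M1 <= M /\ - M <= - M1).
  { assert (Rabs M1 <= M) by apply Rmax_l. assert (M1 <= Rabs M1) by apply Rle_abs.
    assert (- M1 <= Rabs M1) by (rewrite <- Rabs_Ropp; apply Rle_abs). lra. }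
  assert (B2 : M2 <= M /\ - M <= - M2).
  { assert (Rabs M2 <= M) by apply Rmax_r. assert (M2 <= Rabs M2) by apply Rle_abs.
    assert (- M2 <= Rabs M2) by (rewrite <- Rabs_Ropp; apply Rle_abs). lra. }
  destruct (HM1 (- M) M ltac:(lra) ltac:(lra)) as [w1 [Hw1 E1]].
  destruct (HM2 (- M) M ltac:(lra) ltac:(lra)) as [w2 [Hw2 E2]].
  apply integral_on_iff in Hw1. apply integral_on_iff in Hw2.
  assert (Ew : w1 = w2) by exact (is_RInt_R_unique f _ _ _ _ Hw1 Hw2).
  assert (Rabs (v1 - v2) <= Rabs (w1 - v1) + Rabs (w2 - v2)).
  { replace (v1 - v2) with (- (w1 - v1) + (w2 - v2)) by (rewrite Ew; ring).
    rewrite <- (Rabs_Ropp (w1 - v1)). apply Rabs_triang. }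
  unfold e in *. lra.
Qed.

Lemma improper_integral_left_tail (f F : R -> R) (s v : R) :
  (forall x, s < x -> f x = 0) ->
  (forall a, a <= s -> is_RInt f a s (v - F a)) ->
  (forall eps, 0 < eps -> exists M, forall a, a <= - M -> Rabs (F a) < eps) ->
  improper_integral f v.
Proof.
  intros Hright Hleft HF eps Heps.
  destruct (HF eps Heps) as [M0 HM0].
  exists (Rabs M0 + Rabs s + 1). intros a b Ha Hb.
  assert (P0 := Rle_abs M0). assert (P0' := Rabs_pos M0).
  assert (Ps := Rle_abs s). assert (Ps' := Rle_abs (- s)). rewrite Rabs_Ropp in Ps'.
  exists (v - F a). split.
  - apply integral_on_iff. replace (v - F a) with ((v - F a) + 0) by ring.
    apply (is_RInt_Chasles f a s b); [apply Hleft; lra|].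
    apply is_RInt_vanishing. intros x Hx. rewrite Rmin_left, Rmax_right in Hx by lra.
    apply Hright; lra.
  - replace (v - F a - v) with (- F a) by ring. rewrite Rabs_Ropp. apply HM0. lra.
Qed.

Lemma glb_spec (E : R -> Prop) :
  (exists x, E x) -> (exists m, forall x, E x -> m <= x) -> is_glb E (glb E).
Proof.
  intros [x0 Hx0] [m0 Hm0]. unfold glb. apply epsilon_spec.
  set (E' := fun y => E (- y)).
  assert (Hb : bound E') by (exists (- m0); intros y Hy; specialize (Hm0 _ Hy); lra).
  assert (Hne : exists y, E' y) by (exists (- x0); unfold E'; rewrite Ropp_involutive; auto).
  destruct (completeness E' Hb Hne) as [m [Hm1 Hm2]].
  exists (- m). split.
  - intros x Hx. assert (E' (- x)) by (unfold E'; rewrite Ropp_involutive; auto).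
    specialize (Hm1 _ H). lra.
  - intros m' Hm'. assert (m <= - m') by (apply Hm2; intros y Hy; specialize (Hm' _ Hy); lra).
    lra.
Qed.

Lemma lub_spec (E : R -> Prop) : bound E -> (exists x, E x) -> is_lub E (lub E).
Proof.
  intros Hb Hne. unfold lub. apply epsilon_spec.
  destruct (completeness E Hb Hne) as [m Hm]. exists m; exact Hm.
Qed.

Section Density.
Variables (g G : R -> R).
Hypothesis g_nonneg : forall z, 0 <= g z.
Hypothesis G_cdf : is_cdf_of g G.
Hypothesis g_even : forall z, g z = g (- z).
Hypothesis g_unimodal : forall x y, 0 <= x <= y -> g y <= g x.

Lemma g_increasing_neg (x y : R) : x <= y <= 0 -> g x <= g y.
Proof. intros H. rewrite (g_even x), (g_even y). apply g_unimodal. lra. Qed.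

Lemma g_le_mode (z : R) : g z <= g 0.
Proof.
  destruct (Rle_dec 0 z); [apply g_unimodal | apply g_increasing_neg]; lra.
Qed.

Lemma G_RInt (a b : R) : is_RInt g a b (G b - G a).
Proof.
  destruct (Rle_dec a b) as [Hab|Hab].
  - apply integral_on_iff, (proj1 G_cdf), Hab.
  - replace (G b - G a) with (- (G a - G b)) by ring.
    apply (is_RInt_swap g a b), integral_on_iff, (proj1 G_cdf). lra.
Qed.

Lemma G_mono (a b : R) : a <= b -> G a <= G b.
Proof.
  intros Hab. assert (H := is_RInt_ge_0 g a b _ Hab (G_RInt a b)).
  assert (0 <= G b - G a) by (apply H; intros; apply g_nonneg). lra.
Qed.

Lemma G_lipschitz (a b : R) : a <= b -> G b - G a <= g 0 * (b - a).
Proof.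
  intros Hab. rewrite Rmult_comm.
  apply (is_RInt_le g (fun _ => g 0) a b _ _ Hab (G_RInt a b) (is_RInt_const_R a b (g 0))).
  intros; apply g_le_mode.
Qed.

Lemma G_shift (c a b : R) : is_RInt (fun s => g (s + c)) a b (G (b + c) - G (a + c)).
Proof.
  assert (H := is_RInt_comp_lin g 1 c a b _ (G_RInt (1 * a + c) (1 * b + c))).
  rewrite !Rmult_1_l in H.
  apply (is_RInt_ext (fun y => 1 * g (1 * y + c))); [|exact H].
  intros x _. rewrite !Rmult_1_l. reflexivity.
Qed.

Lemma G_nonneg (x : R) : 0 <= G x.
Proof.
  apply Rnot_lt_le. intro Hx.
  destruct (proj1 (proj2 G_cdf) (- G x) ltac:(lra)) as [M HM].
  specialize (HM (Rmin x (- M)) (Rmin_r _ _)).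
  assert (G (Rmin x (- M)) <= G x) by (apply G_mono, Rmin_l).
  apply Rabs_def2 in HM. lra.
Qed.

Lemma G_le_1 (x : R) : G x <= 1.
Proof.
  apply Rnot_lt_le. intro Hx.
  destruct (proj2 (proj2 G_cdf) (G x - 1) ltac:(lra)) as [M HM].
  specialize (HM (Rmax x M) (Rmax_r _ _)).
  assert (G x <= G (Rmax x M)) by (apply G_mono, Rmax_l).
  apply Rabs_def2 in HM. lra.
Qed.

Lemma G_odd_part (x : R) : G (- x) + G x = 2 * G 0.
Proof.
  assert (Hl := is_RInt_comp_opp g 0 x _ (G_RInt (- 0) (- x))).
  assert (Hr := is_RInt_opp g 0 x _ (G_RInt 0 x)).
  assert (E : G (- x) - G (- 0) = - (G x - G 0)).
  { apply (is_RInt_R_unique (fun y => - g y) 0 x); [|exact Hr].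
    apply (is_RInt_ext (fun y => - g (- y))); [|exact Hl].
    intros y _. rewrite <- g_even. reflexivity. }
  rewrite Ropp_0 in E. lra.
Qed.

Lemma G_symm (x : R) : G (- x) = 1 - G x.
Proof.
  assert (Hhalf : G 0 = 1 / 2).
  { apply Rle_antisym; apply Rnot_lt_le; intros Hlt;
    [set (e := G 0 - 1 / 2) | set (e := 1 / 2 - G 0)];
    destruct (proj1 (proj2 G_cdf) e ltac:(unfold e; lra)) as [M1 HM1];
    destruct (proj2 (proj2 G_cdf) e ltac:(unfold e; lra)) as [M2 HM2];
    set (y := Rmax M1 M2);
    specialize (HM1 (- y) ltac:(apply Ropp_le_contravar, Rmax_l));
    specialize (HM2 y (Rmax_r _ _));
    apply Rabs_def2 in HM1; apply Rabs_def2 in HM2;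
    assert (Hy := G_odd_part y); unfold e in *; lra. }
  assert (H := G_odd_part x). lra.
Qed.

Lemma G_zero : G 0 = 1 / 2.
Proof. assert (H := G_symm 0). rewrite Ropp_0 in H. lra. Qed.

Lemma G_strict (y1 y2 : R) : 0 <= y1 < y2 -> G y1 < 1 -> G y1 < G y2.
Proof.
  intros Hy H1.
  destruct (Rlt_le_dec (G y1) (G y2)) as [|Hle]; auto. exfalso.
  assert (Heq : G y2 = G y1) by (generalize (G_mono y1 y2 ltac:(lra)); lra).
  assert (Hgy2 : g y2 = 0).
  { assert (H := is_RInt_le (fun _ => g y2) g y1 y2 _ _ ltac:(lra)
                   (is_RInt_const_R y1 y2 (g y2)) (G_RInt y1 y2)).
    assert ((y2 - y1) * g y2 <= G y2 - G y1) by (apply H; intros; apply g_unimodal; lra).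
    generalize (g_nonneg y2); nra. }
  assert (Hconst : forall z, y2 <= z -> G z = G y1).
  { intros z Hz.
    assert (H := is_RInt_le g (fun _ => 0) y2 z _ _ Hz (G_RInt y2 z) (is_RInt_const_R y2 z 0)).
    assert (G z - G y2 <= (z - y2) * 0).
    { apply H. intros. rewrite <- Hgy2. apply g_unimodal; lra. }
    generalize (G_mono y2 z Hz). lra. }
  destruct (proj2 (proj2 G_cdf) (1 - G y1) ltac:(lra)) as [M HM].
  specialize (HM (Rmax y2 M) (Rmax_r _ _)). rewrite Hconst in HM by apply Rmax_l.
  apply Rabs_def2 in HM. lra.
Qed.

Lemma g_zero_left (x z : R) : G x <= 0 -> z < x -> g z = 0.
Proof.
  intros Hx Hz.
  assert (Hx0 : x < 0).
  { destruct (Rlt_le_dec x 0) as [|H]; auto.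
    assert (G 0 <= G x) by (apply G_mono; auto). rewrite G_zero in H0. lra. }
  assert (H := is_RInt_le (fun _ => g z) g z x _ _ ltac:(lra)
                 (is_RInt_const_R z x (g z)) (G_RInt z x)).
  assert ((x - z) * g z <= G x - G z) by (apply H; intros; apply g_increasing_neg; lra).
  generalize (G_nonneg z) (g_nonneg z). nra.
Qed.

Lemma G_increment_shrinks (p x dl : R) : 0 <= p <= x -> 0 <= dl ->
  G (x + dl) - G x <= G (p + dl) - G p.
Proof.
  intros Hpx Hdl.
  assert (H := G_shift (x - p) p (p + dl)).
  replace (p + dl + (x - p)) with (x + dl) in H by ring.
  replace (p + (x - p)) with x in H by ring.
  apply (is_RInt_le _ g p (p + dl) _ _ ltac:(lra) H (G_RInt p (p + dl))).
  intros s Hs. apply g_unimodal. lra.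
Qed.

Lemma Ginv_spec (t : R) : 0 < t < 1 -> is_glb (fun x => G x >= t) (Ginv G t).
Proof.
  intros Ht. apply glb_spec.
  - destruct (proj2 (proj2 G_cdf) (1 - t) ltac:(lra)) as [M HM].
    exists M. specialize (HM M (Rle_refl _)). apply Rabs_def2 in HM. lra.
  - destruct (proj1 (proj2 G_cdf) t ltac:(lra)) as [M HM].
    exists (- M). intros x Hx. apply Rnot_lt_le. intros Hlt.
    specialize (HM x ltac:(lra)). apply Rabs_def2 in HM. lra.
Qed.

Lemma Ginv_le (t x : R) : 0 < t < 1 -> G x >= t -> Ginv G t <= x.
Proof. intros Ht Hx. exact (proj1 (Ginv_spec t Ht) x Hx). Qed.

(* G is continuous, so it attains every level t in (0,1) at its quantile. *)
Lemma G_Ginv (t : R) : 0 < t < 1 -> G (Ginv G t) = t.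
Proof.
  intros Ht. destruct (Ginv_spec t Ht) as [Hlow Hgreatest].
  set (m := Ginv G t) in *.
  assert (Hg00 := g_nonneg 0).
  destruct (Rtotal_order (G m) t) as [Hlt|[Heq|Hgt]]; auto; exfalso.
  - set (dl := (t - G m) / (g 0 + 1)).
    assert (Hdl : 0 < dl) by (apply Rdiv_lt_0_compat; lra).
    assert (Hsmall : g 0 * dl < t - G m) by (unfold dl; apply Rmult_lt_reg_r with (g 0 + 1);
      [lra|]; field_simplify; nra).
    assert (m + dl <= m); [|lra].
    apply Hgreatest. intros x Hx. apply Rnot_lt_le. intros Hxlt.
    assert (L := G_lipschitz m x (Hlow x Hx)).
    assert (g 0 * (x - m) <= g 0 * dl) by (apply Rmult_le_compat_l; lra). lra.
  - set (dl := (G m - t) / (g 0 + 1)).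
    assert (Hdl : 0 < dl) by (apply Rdiv_lt_0_compat; lra).
    assert (Hsmall : g 0 * dl < G m - t) by (unfold dl; apply Rmult_lt_reg_r with (g 0 + 1);
      [lra|]; field_simplify; nra).
    assert (L := G_lipschitz (m - dl) m ltac:(lra)).
    replace (m - (m - dl)) with dl in L by ring.
    assert (m <= m - dl) by (apply Hlow; lra). lra.
Qed.

Lemma Ginv_mono (t1 t2 : R) : 0 < t1 -> t1 <= t2 -> t2 < 1 -> Ginv G t1 <= Ginv G t2.
Proof. intros. apply Ginv_le; [lra|]. rewrite G_Ginv by lra. lra. Qed.

Hypothesis g_logconcave : forall x y t, 0 < g x -> 0 < g y -> 0 <= t <= 1 ->
  0 < g (t * x + (1 - t) * y) /\
  t * ln (g x) + (1 - t) * ln (g y) <= ln (g (t * x + (1 - t) * y)).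

(* Log-concavity as monotone likelihood ratio: for s <= t and k >= 0,
   g (t + k) / g t <= g (s + k) / g s. *)
Lemma g_ratio (s t k : R) : s <= t -> 0 <= k -> g (t + k) * g s <= g (s + k) * g t.
Proof.
  intros Hst Hk.
  assert (P1 := g_nonneg (s + k)). assert (P2 := g_nonneg t).
  destruct (Req_dec (g s) 0) as [Z|Z]; [rewrite Z; nra|].
  destruct (Req_dec (g (t + k)) 0) as [Z2|Z2]; [rewrite Z2; nra|].
  destruct (Req_dec (t + k - s) 0) as [Z3|Z3].
  { replace k with 0 by lra. replace t with s by lra. rewrite Rplus_0_r. lra. }
  assert (Gs := g_nonneg s). assert (Gtk := g_nonneg (t + k)).
  set (lam := (t - s) / (t + k - s)).
  assert (Hlam : 0 <= lam <= 1).
  { unfold lam. split; [apply Rdiv_le_0_compat; lra|].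
    apply Rmult_le_reg_r with (t + k - s); [lra|]. field_simplify; lra. }
  assert (E1 : lam * s + (1 - lam) * (t + k) = s + k) by (unfold lam; field; lra).
  assert (E2 : (1 - lam) * s + (1 - (1 - lam)) * (t + k) = t) by (unfold lam; field; lra).
  destruct (g_logconcave s (t + k) lam ltac:(lra) ltac:(lra) Hlam) as [Q1 Q2].
  destruct (g_logconcave s (t + k) (1 - lam) ltac:(lra) ltac:(lra) ltac:(lra)) as [Q3 Q4].
  rewrite E1 in Q1, Q2. rewrite E2 in Q3, Q4.
  apply Rnot_lt_le. intros Hlt. apply ln_increasing in Hlt; [|apply Rmult_lt_0_compat; lra].
  rewrite !ln_mult in Hlt by lra. lra.
Qed.

(* Integrated form of [g_ratio]: a window [p, p + dl] compared with its
   translate by k, both against the mass of [a, p] and of its translate. *)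
Lemma G_window_ratio (a p k dl : R) : a <= p -> 0 <= k -> 0 <= dl ->
  (G p - G a) * (G (p + k + dl) - G (p + k))
    <= (G (p + k) - G (a + k)) * (G (p + dl) - G p).
Proof.
  intros Hap Hk Hdl.
  set (A := G p - G a). set (B := G (p + k) - G (a + k)).
  assert (Hpoint : forall t, p < t < p + dl -> A * g (t + k) <= B * g t).
  { intros t Ht. rewrite (Rmult_comm A), (Rmult_comm B).
    apply (is_RInt_le (fun s => g (t + k) * g s) (fun s => g t * g (s + k)) a p _ _ Hap
             (is_RInt_scal g a p (g (t + k)) _ (G_RInt a p))
             (is_RInt_scal _ a p (g t) _ (G_shift k a p))).
    intros s Hs. rewrite (Rmult_comm (g t)). apply g_ratio; lra. }
  assert (H := is_RInt_le _ _ p (p + dl) _ _ ltac:(lra)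
                 (is_RInt_scal _ p (p + dl) A _ (G_shift k p (p + dl)))
                 (is_RInt_scal g p (p + dl) B _ (G_RInt p (p + dl))) Hpoint).
  replace (p + dl + k) with (p + k + dl) in H by ring. exact H.
Qed.

(* Letting a -> -oo in [G_window_ratio]: G is log-concave in the sense
   G p (G (x + dl) - G x) <= G x (G (p + dl) - G p) for p <= x. *)
Lemma G_logconcave (p x dl : R) : p <= x -> 0 <= dl ->
  G p * (G (x + dl) - G x) <= G x * (G (p + dl) - G p).
Proof.
  intros Hpx Hdl.
  assert (Dx : 0 <= G (x + dl) - G x <= 1)
    by (generalize (G_mono x (x + dl) ltac:(lra)) (G_le_1 (x + dl)) (G_nonneg x); lra).
  assert (Dp : 0 <= G (p + dl) - G p) by (generalize (G_mono p (p + dl) ltac:(lra)); lra).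
  apply Rnot_lt_le. intro Hc.
  set (e := G p * (G (x + dl) - G x) - G x * (G (p + dl) - G p)).
  destruct (proj1 (proj2 G_cdf) e ltac:(unfold e; lra)) as [M HM].
  set (a := Rmin p (- M)).
  specialize (HM a (Rmin_r _ _)). apply Rabs_def2 in HM.
  assert (W := G_window_ratio a p (x - p) dl (Rmin_l _ _) ltac:(lra) Hdl).
  replace (p + (x - p)) with x in W by ring.
  assert (G0a := G_nonneg a). assert (G0ak := G_nonneg (a + (x - p))).
  unfold e in *. nra.
Qed.


Section HPD.
Variable alpha : R.
Hypothesis alpha_range : 0 < alpha < 1.

Let p0 := 1 / (1 + alpha).
Let c := alpha ^ 2 / (1 + alpha).
Let D0 := d0 G alpha.
Let q := Ginv G (1 - c).
Let th := q - D0.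
Let level (x : R) := 1 / 2 + (1 - alpha) / 2 * G x.

Lemma levels :
  1 / 2 < p0 < 1 /\ 0 < c /\ p0 < 1 - c < 1 /\ 1 - p0 = alpha * p0 /\ alpha * (alpha * p0) = c.
Proof.
  unfold p0, c. assert (0 < alpha ^ 2 / (1 + alpha)) by (apply Rdiv_lt_0_compat; nra).
  repeat split; try lra.
  all: try (field; lra).
  all: apply Rmult_lt_reg_r with (2 * (1 + alpha)); [lra|]; field_simplify; nra.
Qed.

Lemma G_D0 : G D0 = p0.
Proof. apply G_Ginv. generalize levels; lra. Qed.

Lemma G_mD0 : G (- D0) = alpha * p0.
Proof. rewrite G_symm, G_D0. generalize levels; lra. Qed.

Lemma G_q : G q = 1 - c.
Proof. apply G_Ginv. generalize levels; lra. Qed.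

Lemma G_mq : G (- q) = c.
Proof. rewrite G_symm, G_q. ring. Qed.

Lemma D0_pos : 0 < D0.
Proof.
  apply Rnot_le_lt. intros H. assert (G D0 <= G 0) by (apply G_mono; auto).
  rewrite G_D0, G_zero in H0. generalize levels; lra.
Qed.

Lemma th_pos : 0 < th.
Proof.
  apply Rnot_le_lt. intros H. assert (G q <= G D0) by (apply G_mono; unfold th in H; lra).
  rewrite G_q, G_D0 in H0. generalize levels; lra.
Qed.

Lemma lo_below (x : R) : x <= D0 -> lo G alpha x = 0.
Proof. intros. unfold lo. fold D0. destruct (Rlt_dec D0 x); [lra|auto]. Qed.

Lemma lo_above (x : R) : D0 < x -> lo G alpha x = x - Ginv G (level x).
Proof. intros. unfold lo. fold D0. destruct (Rlt_dec D0 x); [auto|lra]. Qed.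

Lemma up_below (x : R) : x <= D0 -> up G alpha x = x - Ginv G (alpha * G x).
Proof. intros. unfold up. fold D0. destruct (Rle_dec x D0); [auto|lra]. Qed.

Lemma up_above (x : R) : D0 < x -> up G alpha x = x + Ginv G (level x).
Proof. intros. unfold up. fold D0. destruct (Rle_dec x D0); [lra|auto]. Qed.

Lemma level_range (x : R) : D0 < x -> p0 <= level x <= G x /\ level x <= 1 - alpha / 2.
Proof.
  intros Hx. assert (HG := G_mono D0 x ltac:(lra)). rewrite G_D0 in HG.
  assert (G1 := G_le_1 x). assert (L := levels). unfold level.
  assert (Hp0 : p0 * (1 + alpha) = 1) by (unfold p0; field; lra).
  repeat split; nra.
Qed.

(* l is nondecreasing beyond d0: the quantile increases by at most the
   shift, since increments of G shrink beyond the mode. *)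
Lemma lo_mono (x y : R) : D0 < x -> x <= y -> lo G alpha x <= lo G alpha y.
Proof.
  intros Hx Hxy. rewrite !lo_above by lra.
  destruct (level_range x Hx) as [[Rx1 Rx2] Rx3].
  destruct (level_range y ltac:(lra)) as [[Ry1 Ry2] Ry3].
  assert (L := levels).
  set (px := Ginv G (level x)).
  assert (Gpx : G px = level x) by (apply G_Ginv; lra).
  assert (Hpx0 : 0 <= px).
  { apply Rnot_lt_le. intros H. assert (G px <= G 0) by (apply G_mono; lra).
    rewrite G_zero in H0. lra. }
  assert (Hpxx : px <= x) by (apply Ginv_le; lra).
  assert (Hinc := G_increment_shrinks px x (y - x) ltac:(lra) ltac:(lra)).
  replace (x + (y - x)) with y in Hinc by ring.
  assert (Ginv G (level y) <= px + (y - x)); [|lra].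
  apply Ginv_le; [lra|]. unfold level in *. rewrite Gpx in Hinc.
  assert (G x <= G y) by (apply G_mono; lra). nra.
Qed.

(* u is nondecreasing below d0 where G > 0; this is where log-concavity enters. *)
Lemma up_mono (x y : R) : x <= y -> y <= D0 -> 0 < G x -> up G alpha x <= up G alpha y.
Proof.
  intros Hxy HyD Gx. rewrite !up_below by lra.
  assert (Gxy := G_mono x y Hxy). assert (Gy1 := G_le_1 y).
  set (p := Ginv G (alpha * G x)).
  assert (Gp : G p = alpha * G x) by (apply G_Ginv; split; nra).
  assert (Hpx : p <= x) by (apply Ginv_le; [split; nra | nra]).
  assert (Lc := G_logconcave p x (y - x) Hpx ltac:(lra)).
  replace (x + (y - x)) with y in Lc by ring. rewrite Gp in Lc.
  assert (alpha * G y <= G (p + (y - x))) by (apply Rmult_le_reg_l with (G x); nra).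
  assert (Ginv G (alpha * G y) <= p + (y - x)) by (apply Ginv_le; [split; nra | lra]).
  lra.
Qed.

Lemma up_at_mD0 : th <= up G alpha (- D0).
Proof.
  assert (HD := D0_pos). assert (L := levels).
  rewrite up_below, G_mD0 by lra.
  replace (alpha * (alpha * p0)) with c by lra.
  assert (Ginv G c <= - q) by (apply Ginv_le; [lra | rewrite G_mq; lra]).
  unfold th. lra.
Qed.

(* -d0 lies below the alpha p0 quantile (G is strictly increasing near -d0). *)
Lemma Ginv_at_mD0 : - D0 <= Ginv G (alpha * p0).
Proof.
  destruct levels as [[Lp0 Lp1] [_ [_ [Ep0 _]]]]. assert (HD := D0_pos).
  apply (proj2 (Ginv_spec (alpha * p0) ltac:(split; nra))). intros z Hz.
  apply Rnot_lt_le. intros Hlt.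
  assert (S := G_strict D0 (- z) ltac:(lra) ltac:(rewrite G_D0; lra)).
  rewrite G_D0, G_symm in S. lra.
Qed.

(* Beyond d0, u stays above th: u x >= 2 d0 >= u d0 >= u (-d0) >= th. *)
Lemma up_above_th (x : R) : D0 < x -> th <= up G alpha x.
Proof.
  intros Hx. assert (L := levels). assert (HD := D0_pos).
  rewrite up_above by auto. destruct (level_range x Hx) as [[R1 R2] R3].
  assert (D0 <= Ginv G (level x)) by (unfold D0, d0; apply Ginv_mono; fold p0; lra).
  assert (U := up_mono (- D0) D0 ltac:(lra) (Rle_refl _) ltac:(rewrite G_mD0; nra)).
  rewrite (up_below D0 (Rle_refl _)), G_D0 in U.
  generalize up_at_mD0 Ginv_at_mD0. lra.
Qed.

Let lower_ok (x : R) := th >= lo G alpha x.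
Let s := linv G alpha th.

Lemma lower_ok_bounded (x : R) : lower_ok x -> x <= Rmax D0 (th + Ginv G (1 - alpha / 2)).
Proof.
  intros Hx. destruct (Rle_lt_dec x D0) as [H|H].
  - eapply Rle_trans; [exact H | apply Rmax_l].
  - unfold lower_ok in Hx. rewrite lo_above in Hx by auto.
    destruct (level_range x H) as [[R1 _] R3]. assert (L := levels).
    assert (Ginv G (level x) <= Ginv G (1 - alpha / 2)) by (apply Ginv_mono; lra).
    eapply Rle_trans; [|apply Rmax_r]. lra.
Qed.

Lemma lower_ok_D0 : lower_ok D0.
Proof. unfold lower_ok. rewrite lo_below by lra. generalize th_pos; lra. Qed.

Lemma s_is_lub : is_lub lower_ok s.
Proof.
  apply lub_spec; [|exists D0; apply lower_ok_D0].
  exists (Rmax D0 (th + Ginv G (1 - alpha / 2))). exact lower_ok_bounded.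
Qed.

Lemma D0_le_s : D0 <= s.
Proof. apply (proj1 s_is_lub), lower_ok_D0. Qed.

Lemma lower_ok_below (x : R) : x < s -> lower_ok x.
Proof.
  intros Hx. destruct (Rle_lt_dec x D0) as [Hx0|Hx0].
  - unfold lower_ok. rewrite lo_below by auto. generalize th_pos; lra.
  - apply NNPP. intros Hn. assert (s <= x); [|lra].
    apply (proj2 s_is_lub). intros y Hy. apply Rnot_lt_le. intros Hyx. apply Hn.
    unfold lower_ok in *. assert (lo G alpha x <= lo G alpha y) by (apply lo_mono; lra). lra.
Qed.

Lemma lower_fails_above (x : R) : s < x -> th < lo G alpha x.
Proof.
  intros Hx. apply Rnot_le_lt. intros H.
  assert (x <= s) by (apply (proj1 s_is_lub); unfold lower_ok; lra). lra.
Qed.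

Let upper_ok (x : R) := 0 < G x /\ th <= up G alpha x.

Lemma upper_ok_upward (x y : R) : upper_ok y -> y <= x -> upper_ok x.
Proof.
  intros [Hy1 Hy2] Hyx. split.
  - generalize (G_mono y x Hyx); lra.
  - destruct (Rle_lt_dec x D0) as [H|H].
    + assert (up G alpha y <= up G alpha x) by (apply up_mono; auto). lra.
    + apply up_above_th; auto.
Qed.

Lemma upper_ok_mD0 : upper_ok (- D0).
Proof.
  split; [|apply up_at_mD0].
  rewrite G_mD0. destruct levels as [[Lp0 _] _]. nra.
Qed.

Lemma upper_ok_cut (x : R) : upper_ok x \/ (forall y, upper_ok y -> x <= y).
Proof.
  destruct (classic (upper_ok x)) as [Hx|Hx]; [left; exact Hx | right].
  intros y Hy. apply Rnot_lt_le. intros Hyx. apply Hx, (upper_ok_upward x y Hy). lra.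
Qed.

Let integrand (x : R) := g (x - th) * cover_ind G alpha th x.

Lemma integrand_inside (x : R) : upper_ok x -> x < s -> integrand x = g (x - th).
Proof.
  intros [_ Hup] Hx. assert (Hlo := lower_ok_below x Hx). unfold lower_ok in Hlo.
  unfold integrand, cover_ind.
  destruct (Rle_dec (lo G alpha x) th); [|lra]. destruct (Rle_dec th (up G alpha x)); [|lra].
  ring.
Qed.

Lemma integrand_right (x : R) : s < x -> integrand x = 0.
Proof.
  intros Hx. assert (Hlo := lower_fails_above x Hx). unfold integrand, cover_ind.
  destruct (Rle_dec (lo G alpha x) th); [lra|]. ring.
Qed.

Lemma integrand_outside (x : R) : ~ upper_ok x -> integrand x = 0.
Proof.
  intros Hx. unfold integrand, cover_ind. unfold upper_ok in Hx.
  destruct (Rlt_le_dec 0 (G x)) as [HG|HG].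
  - destruct (Rle_dec th (up G alpha x)); [tauto|]. destruct (Rle_dec (lo G alpha x) th); ring.
  - rewrite (g_zero_left x (x - th) HG) by (generalize th_pos; lra). ring.
Qed.

Lemma integrand_RInt (a m : R) : a <= m <= s ->
  (forall x, a < x < m -> integrand x = 0) -> (forall x, m < x < s -> upper_ok x) ->
  is_RInt integrand a s (G (s - th) - G (m - th)).
Proof.
  intros Ham Hzero Hup.
  replace (G (s - th) - G (m - th)) with (0 + (G (s - th) - G (m - th))) by ring.
  apply (is_RInt_Chasles integrand a m s).
  - apply is_RInt_vanishing. intros x Hx. rewrite Rmin_left, Rmax_right in Hx by lra. auto.
  - apply (is_RInt_ext (fun x => g (x + - th))); [|exact (G_shift (- th) m s)].
    intros x Hx. rewrite Rmin_left, Rmax_right in Hx by lra.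
    symmetry. apply integrand_inside; [apply Hup|]; lra.
Qed.

(* The coverage integral exists and is at least G (s - th) - c: the integrand
   is g (x - th) between r = inf {upper_ok} <= -d0 and s, and 0 outside. *)
Lemma integrand_improper : exists v, improper_integral integrand v /\ v >= G (s - th) - c.
Proof.
  assert (L := levels). assert (HD := D0_pos). assert (Hs := D0_le_s). assert (Ht := th_pos).
  destruct (classic (forall x, upper_ok x)) as [Hall|Hsome].
  - exists (G (s - th)). split; [|lra].
    apply (improper_integral_left_tail integrand (fun a => G (a - th)) s);
      [exact integrand_right| |].
    + intros a Has. apply integrand_RInt; [lra | intros; lra | auto].
    + intros eps Heps. destruct (proj1 (proj2 G_cdf) eps Heps) as [M HM].
      exists (M + th). intros a Ha. apply HM. lra.
  - apply not_all_ex_not in Hsome. destruct Hsome as [x0 Hx0].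
    destruct (glb_spec upper_ok (ex_intro _ (- D0) upper_ok_mD0)) as [Hr1 Hr2].
    { exists x0. destruct (upper_ok_cut x0) as [H|H]; [contradiction | exact H]. }
    set (r := glb upper_ok) in *.
    assert (HrD : r <= - D0) by (apply Hr1, upper_ok_mD0).
    exists (G (s - th) - G (r - th)). split.
    + apply (improper_integral_left_tail integrand
               (fun a => G (Rmax a r - th) - G (r - th)) s); [exact integrand_right| |].
      * intros a Has. replace (G (s - th) - G (r - th) - (G (Rmax a r - th) - G (r - th)))
          with (G (s - th) - G (Rmax a r - th)) by ring.
        assert (Hm := Rmax_l a r). assert (Hm' := Rmax_r a r).
        apply integrand_RInt; [split; [lra | apply Rmax_lub; lra] | |].
        -- intros x Hx. apply integrand_outside. intros Hux.
           assert (r <= x) by (apply Hr1, Hux).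
           assert (Rmax a r <= x) by (apply Rmax_lub; lra). lra.
        -- intros x Hx. destruct (upper_ok_cut x) as [H|H]; [exact H|].
           assert (x <= r) by (apply Hr2, H). lra.
      * intros eps Heps. exists (Rabs r). intros a Ha.
        assert (a <= r) by (generalize (Rle_abs (- r)); rewrite Rabs_Ropp; lra).
        rewrite Rmax_right by lra. rewrite Rminus_diag, Rabs_R0. exact Heps.
    + assert (G (r - th) <= G (- q)) by (apply G_mono; unfold th; lra).
      rewrite G_mq in H. lra.
Qed.

Lemma coverage_at_d2 :
  (forall M, is_lub (fun cv => exists theta, 0 <= theta /\ cv = coverage g G alpha theta) M ->
     coverage g G alpha th <= M) /\
  coverage g G alpha th >= G (x1 G alpha th) - c.
Proof.
  split.
  - intros M HM. apply (proj1 HM). exists th. split; [left; apply th_pos | reflexivity].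
  - destruct integrand_improper as [v [Hv Hge]].
    assert (E : coverage g G alpha th = v).
    { apply (improper_integral_unique integrand); [|exact Hv].
      unfold coverage. apply epsilon_spec. exists v. exact Hv. }
    rewrite E. exact Hge.
Qed.

End HPD.
End Density.

Theorem mainTheorem6 (g G : R -> R) (alpha : R) :
  0 < alpha < 1 ->
  (forall z, 0 <= g z) ->
  is_cdf_of g G ->
  (forall z, g z = g (- z)) ->
  (forall x y, 0 <= x <= y -> g y <= g x) ->
  (forall x y t, 0 < g x -> 0 < g y -> 0 <= t <= 1 ->
     0 < g (t * x + (1 - t) * y) /\
     t * ln (g x) + (1 - t) * ln (g y) <= ln (g (t * x + (1 - t) * y))) ->
  let d2 := Ginv G (1 - alpha ^ 2 / (1 + alpha)) - d0 G alpha in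
  (forall M, is_lub (fun c => exists theta, 0 <= theta /\ c = coverage g G alpha theta) M ->
     coverage g G alpha d2 <= M) /\
  coverage g G alpha d2 >= G (x1 G alpha d2) - alpha ^ 2 / (1 + alpha).
Proof.
  intros alpha_range g_nonneg G_cdf g_even g_unimodal g_logconcave d2.
  exact (coverage_at_d2 g G g_nonneg G_cdf g_even g_unimodal g_logconcave alpha alpha_range).
Qed.
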